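(* Let $T>0$, $m\in\,]0,1[$ and let $\mathcal{U}(t,x)=t^{-\alpha}\left(D+\tilde k|x|^2t^{-2\alpha}\right)^{-\frac{1}{1-m}}$ for $t>0$, $x\in\mathbb{R}$, with $\alpha=\frac{1}{m+1}$, $\tilde k=\frac{1-m}{2(m+1)m}$, $D=\left(\frac{I}{\sqrt{\tilde k}}\right)^{\frac{2(1-m)}{m+1}}$, $I=\int_{-\pi/2}^{\pi/2}[\cos(x)]^{\frac{2m}{1-m}}dx$. Then: (i) if $\frac13<m<1$, there exist $p\ge2$ and a constant $\mathcal{C}_p$ (depending on $T$) such that for all $0\le s<\ell\le T$, \[\int_{]s,\ell]\times\mathbb{R}}\left(\mathcal{U}(t,x)\right)^{\frac{p(m-1)}{2}+1}dt\,dx\le\mathcal{C}_p(\ell-s);\] (ii) if $\frac13<m<1$, $\int_{]0,T]\times\mathbb{R}}(\mathcal{U}(t,x))^m\,dt\,dx<+\infty$; (iii) if $\frac15<m<1$, $\int_{]0,T]\times\mathbb{R}}(\mathcal{U}(t,x))^{2m}\,dt\,dx<+\infty$; (iv) if $\frac35<m<1$, then for every $\kappa>0$, $\int_{\mathbb{R}}|x|^4\,\mathcal{U}(\kappa,x)\,dx<+\infty$. *)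

From HB Require Import structures.
From mathcomp Require Import all_boot all_order all_algebra.
From mathcomp Require Import all_classical all_reals all_analysis.
Set Implicit Arguments. Unset Strict Implicit. Unset Printing Implicit Defensive.
Import Order.TTheory GRing.Theory Num.Theory.
Import numFieldNormedType.Exports.
Local Open Scope classical_set_scope.
Local Open Scope ring_scope.

Section Barenblatt.
Variable R : realType.

Definition alpha (m : R) : R := (m + 1)^-1.
Definition ktilde (m : R) : R := (1 - m) / (2 * (m + 1) * m).
Definition Ical (m : R) : R :=
  Rintegral (@lebesgue_measure R) `[- (pi / 2), pi / 2]%classic
    (fun x => (cos x) `^ (2 * m / (1 - m))).
Definition Dcal (m : R) : R :=
  (Ical m / Num.sqrt (ktilde m)) `^ (2 * (1 - m) / (m + 1)).
Definition Ucal (m t x : R) : R :=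
  t `^ (- alpha m) *
  (Dcal m + ktilde m * `|x| ^+ 2 * t `^ (- (2 * alpha m))) `^ (- (1 - m)^-1).

End Barenblatt.

From HB Require Import structures.
From mathcomp Require Import all_boot all_order all_algebra.
From mathcomp Require Import all_classical all_reals all_analysis.
From mathcomp Require Import ring lra measurable_realfun.
Set Implicit Arguments.
Unset Strict Implicit.
Unset Printing Implicit Defensive.

Import Order.TTheory GRing.Theory Num.Theory.
Import numFieldNormedType.Exports.
Local Open Scope classical_set_scope.
Local Open Scope ring_scope.

(* With nu := min(D, k~)/2 one has D + k~ y^2 >= nu (1 + y)^2, hence
     U(t,x)^q <= C t^(-alpha q) (1 + |x|/t^alpha)^(-2q/(1-m)).
   For 2q/(1-m) > 1 the right-hand side integrates explicitly in x, so that
   int_R U(t,x)^q dx <= K t^(alpha (1-q)).  By Tonelli the space-time integrals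
   reduce to integrals of t^(alpha (1-q)): for q = m the exponent is nonnegative,
   which gives (i) with p = 2 and (ii); for q = 2m it exceeds -1, which gives (iii).
   For (iv), |x|^4 <= t^(4 alpha) (1 + |x|/t^alpha)^4 lowers the decay exponent
   2/(1-m) by 4, and it stays above 1 exactly when m > 3/5.
   That D > 0, i.e. I > 0, is what makes the bound integrable near x = 0. *)

Section powR_facts.
Context {R : realType}.

Lemma ler_powRN (e a b : R) : 0 < e -> 0 < a -> a <= b -> b `^ (- e) <= a `^ (- e).
Proof.
move=> e0 a0 ab; rewrite !powRN lef_pV2 ?posrE ?powR_gt0 ?(lt_le_trans a0)//.
by apply: (ge0_ler_powR (ltW e0)) => //; rewrite nnegrE ?ltW ?(lt_le_trans a0).
Qed.

Lemma powR_continuous (e a : R) : 0 < a -> {for a, continuous (fun x : R => x `^ e)}.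
Proof.
move=> a0; apply: differentiable_continuous; apply/derivable1_diffP.
by apply: derivable_powR; rewrite in_itv/= a0.
Qed.

Lemma powRN_cvgy (e : R) : 0 < e -> x `^ (- e) @[x --> +oo] --> 0.
Proof.
move=> e0; apply/cvgrPdist_le => eps eps0.
near=> x; rewrite sub0r normrN ger0_norm ?powR_ge0//.
have -> : eps = (eps `^ (- e^-1)) `^ (- e).
  by rewrite -powRrM mulrN mulNr opprK mulVf ?gt_eqF// powRr1// ltW.
by apply: ler_powRN; rewrite ?powR_gt0.
Unshelve. all: by end_near. Qed.

Lemma is_derive_powR_affine (c e x : R) : 0 < 1 + x / c ->
  is_derive x 1 (fun y : R => (1 + y / c) `^ e) (e * (1 + x / c) `^ (e - 1) / c).
Proof.
move=> x_pos.
have [daff daffE] : is_derive x 1 (fun y : R => 1 + y / c) c^-1.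
  have -> : (fun y : R => 1 + y / c) = (cst 1 + ( *:%R c^-1))%R.
    by apply/funext => y /=; rewrite mulrC.
  by apply: is_derive_eq; rewrite add0r /GRing.scale /= mulr1.
have [dpow dpowE] := is_derive1_powR e x_pos.
have dcomp : derivable ((fun y : R => y `^ e) \o (fun y : R => 1 + y / c)) x 1.
  by apply/derivable1_diffP/differentiable_comp; apply/derivable1_diffP.
apply: DeriveDef => //.
by rewrite -derive1E (derive1_comp daff dpow) !derive1E daffE dpowE.
Qed.

End powR_facts.

Section algebraic_decay.
Context {R : realType}.
Local Notation mu := (@lebesgue_measure R).

Definition decay (c b x : R) : R := (1 + `|x| / c) `^ (- b).

Lemma decay_continuous (c b : R) : 0 < c -> continuous (decay c b).
Proof.
move=> c0 x; rewrite /decay.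
apply: (@continuous_comp _ _ _ (fun x : R => 1 + `|x| / c) (fun y : R => y `^ (- b))).
  by apply: cvgD; [exact: cvg_cst | apply: cvgM; [exact: norm_continuous | exact: cvg_cst]].
by apply: powR_continuous; rewrite ltr_pwDl// divr_ge0// ltW.
Qed.

Lemma integral_decay_itvcy (M c b : R) : 0 <= M -> 0 < c -> 1 < b ->
  (\int[mu]_(x in `[0%R, +oo[) (M * decay c b x)%:E = (M * c / (b - 1))%:E)%E.
Proof.
move=> M0 c0 b1.
pose F x := - (M * c / (b - 1)) * (1 + x / c) `^ (1 - b).
have pos (x : R) : 0 <= x -> 0 < 1 + x / c by move=> x0; rewrite ltr_pwDl// divr_ge0// ltW.
have dF (x : R) : 0 <= x ->
    is_derive x 1 F (- (M * c / (b - 1)) * ((1 - b) * (1 + x / c) `^ (1 - b - 1) / c)).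
  by move=> x0; have := @is_derive_powR_affine _ c (1 - b) x (pos x x0); apply: is_deriveZ.
rewrite (@ge0_continuous_FTC2y _ _ F 0 0).
- by rewrite /F mul0r addr0 powR1 mulr1 EFinN sub0e oppeK.
- by move=> x _; rewrite mulr_ge0 ?powR_ge0.
- apply: continuous_subspaceT => x.
  by apply: cvgM; [exact: cvg_cst | exact: decay_continuous].
- have -> : 0 = - (M * c / (b - 1)) * 0 :> R by rewrite mulr0.
  apply: cvgM; first exact: cvg_cst.
  rewrite -[1 - b]opprB.
  apply: (cvg_comp (fun x : R => 1 + x / c) (fun y : R => y `^ (- (b - 1))) (G := +oo%R)).
    apply/cvgryPge => A; near=> x.
    by rewrite -lerBlDl ler_pdivlMr//.
  by apply: powRN_cvgy; rewrite subr_gt0.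
- by move=> x x0; have [] := dF x (ltW x0).
- apply: cvg_at_right_filter; have [dF0 _] := dF 0 (lexx 0).
  by apply: differentiable_continuous; apply/derivable1_diffP.
- move=> x; rewrite in_itv/= andbT => x0.
  rewrite derive1E; have [_ ->] := dF x (ltW x0).
  rewrite /decay ger0_norm ?ltW// [1 - b - 1]addrAC subrr add0r.
  by field; rewrite gt_eqF// subr_eq0 gt_eqF.
Unshelve. all: by end_near.
Qed.

Lemma integral_decay (M c b : R) : 0 <= M -> 0 < c -> 1 < b ->
  (\int[mu]_x (M * decay c b x)%:E = (2 * (M * c / (b - 1)))%:E)%E.
Proof.
move=> M0 c0 b1; rewrite ge0_symfun_integralT.
- by rewrite -set_itvcy integral_decay_itvcy// EFinM.
- by move=> x; rewrite mulr_ge0 ?powR_ge0.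
- by move=> x; apply: cvgM; [exact: cvg_cst | exact: decay_continuous].
- by move=> x /=; rewrite /decay normrN.
Qed.

Lemma decay_moment_le (n : nat) (c b x : R) : 0 < c ->
  `|x| ^+ n * decay c b x <= c ^+ n * decay c (b - n%:R) x.
Proof.
move=> c0; set P := 1 + `|x| / c.
have P0 : 0 < P by rewrite ltr_pwDl// divr_ge0// ltW.
have x_le : `|x| <= c * P by rewrite mulrDr mulr1 mulrCA divff ?gt_eqF// mulr1 lerDr ltW.
have -> : decay c (b - n%:R) x = P ^+ n * decay c b x.
  rewrite /decay -/P opprB -(powR_mulrn _ (ltW P0)) -powRD; first by rewrite addrC.
  by apply/implyP => _; rewrite gt_eqF.
rewrite mulrA -exprMn ler_wpM2r ?powR_ge0// lerXn2r// nnegrE mulr_ge0 ?ltW//.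
Qed.

End algebraic_decay.

Section ge0_le_integral_nomeas.
Context d (T : measurableType d) (R : realType) (mu : {measure set T -> \bar R}).
Local Open Scope ereal_scope.

(* Unlike [ge0_le_integral], no measurability is required: for nonnegative
   integrands the integral is the supremum over simple minorants. *)
Lemma ge0_le_integral_nomeas (D : set T) (f g : T -> \bar R) :
  (forall x, D x -> 0 <= f x) -> (forall x, D x -> f x <= g x) ->
  \int[mu]_(x in D) f x <= \int[mu]_(x in D) g x.
Proof.
move=> f0 fg; rewrite ge0_integralE// [leRHS]ge0_integralE; last first.
  by move=> x Dx; rewrite (le_trans (f0 x Dx) (fg x Dx)).
apply: le_ereal_sup => _ [h hf <-]; exists h => // x.
rewrite (le_trans (hf x))// /patch; case: ifPn => // /[1!inE] Dx.
exact: fg.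
Qed.

End ge0_le_integral_nomeas.

Section Barenblatt_constants.
Context {R : realType}.
Local Notation mu := (@lebesgue_measure R).

Lemma cos_gt_half_near0 : exists2 r : R, 0 < r <= pi / 2 &
  forall x, - r <= x <= r -> 2^-1 < cos x.
Proof.
have : \forall x \near (0 : R), 2^-1 < cos x.
  have cos_cvg : cos x @[x --> (0 : R)] --> (1 : R).
    by rewrite -cos0; exact: continuous_cos.
  by apply: (cvgr_gt _ cos_cvg); rewrite invf_lt1// ltr1n.
case/nbhs_ballP => d d0 near_cos.
exists (Num.min (d / 2) (pi / 2)).
  by rewrite lt_min !divr_gt0// ?pi_gt0// ge_min lexx orbT.
move=> x hx; apply: near_cos; rewrite -ball_normE /= sub0r normrN.
apply: (le_lt_trans (y := Num.min (d / 2) (pi / 2))); first by rewrite ler_norml.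
by rewrite gt_min ltr_pdivrMr// ltr_pMr// ltr1n.
Qed.

Variable m : R.
Hypotheses (m_gt0 : 0 < m) (m_lt1 : m < 1).

Lemma ktilde_gt0 : 0 < ktilde m.
Proof. by rewrite /ktilde divr_gt0 ?subr_gt0// !mulr_gt0// addr_gt0. Qed.

Lemma Ical_gt0 : 0 < Ical m.
Proof.
set e := 2 * m / (1 - m).
have e0 : 0 <= e by rewrite divr_ge0 ?mulr_ge0 ?subr_ge0// ltW.
rewrite /Ical /Rintegral -/e; apply: fine_gt0; apply/andP; split.
- have [r /andP[r0 r_pi] cos_gt] := cos_gt_half_near0.
  set c := 2^-1 `^ e.
  apply: (@lt_le_trans _ _ (\int[mu]_(x in `[(- (pi / 2))%R, (pi / 2)%R]) ((cst c%:E) \_ `[(- r)%R, r] x))%E).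
    rewrite -integral_mkcondr setIidr; last first.
      move=> x /=; rewrite !in_itv/= => /andP[h1 h2].
      by rewrite (le_trans _ h1) ?lerN2// (le_trans h2).
    rewrite integral_cst//= lebesgue_measure_itv/= lte_fin gtrN// -EFinD -EFinM lte_fin.
    by rewrite opprK mulr_gt0 ?addr_gt0 ?powR_gt0.
  apply: ge0_le_integral_nomeas => x _; rewrite /patch; case: ifPn => [|_].
  + by rewrite lee_fin powR_ge0.
  + by [].
  + rewrite inE/= in_itv/= => /cos_gt half_lt; rewrite lee_fin.
    by apply: (ge0_ler_powR e0); rewrite ?nnegrE ?invr_ge0 ?ltW// (lt_trans _ half_lt).
  + by rewrite lee_fin powR_ge0.
- apply: (@le_lt_trans _ _ (\int[mu]_(x in `[(- (pi / 2))%R, (pi / 2)%R]) (cst 1%:E x))%E).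
    apply: ge0_le_integral_nomeas => x _; rewrite lee_fin ?powR_ge0//.
    have [cos_lt0|cos_ge0] := ltP (cos x) 0; first by rewrite lt0_powR1.
    apply: (@le_trans _ _ (1 `^ e)); last by rewrite powR1.
    by rewrite (ge0_ler_powR e0) ?nnegrE ?cos_le1.
  rewrite integral_cst//= lebesgue_measure_itv/= lte_fin.
  by case: ifPn => _; [rewrite -EFinD mul1e ltry | rewrite mule0 ltry].
Qed.

Lemma Dcal_gt0 : 0 < Dcal m.
Proof. by rewrite /Dcal powR_gt0// divr_gt0 ?Ical_gt0// sqrtr_gt0 ktilde_gt0. Qed.

End Barenblatt_constants.

Section Barenblatt_space_bounds.
Context {R : realType}.
Local Notation mu := (@lebesgue_measure R).
Variable m : R.
Hypotheses (m_gt0 : 0 < m) (m_lt1 : m < 1).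

Let nu := Num.min (Dcal m) (ktilde m) / 2.

Let nu_gt0 : 0 < nu.
Proof. by rewrite divr_gt0// lt_min Dcal_gt0 ?ktilde_gt0. Qed.

(* [(1 + y)^2 <= 2 (1 + y^2)] and [2 nu] is below both [D] and [k~]. *)
Let Barenblatt_base_ge (y : R) : nu * (1 + y) ^+ 2 <= Dcal m + ktilde m * y ^+ 2.
Proof.
have nuD : 2 * nu <= Dcal m by rewrite /nu mulrC divfK ?pnatr_eq0// ge_min lexx.
have nuk : 2 * nu <= ktilde m by rewrite /nu mulrC divfK ?pnatr_eq0// ge_min lexx orbT.
have : 0 <= nu * (y - 1) ^+ 2 by rewrite mulr_ge0 ?sqr_ge0 ?ltW.
have : 2 * nu * y ^+ 2 <= ktilde m * y ^+ 2 by rewrite ler_wpM2r ?sqr_ge0.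
nra.
Qed.

Lemma Ucal_powR_le (q : R) : 0 < q -> exists2 C : R, 0 <= C & forall t x, 0 < t ->
  (Ucal m t x) `^ q <= C * t `^ (- (alpha m * q)) * decay (t `^ alpha m) (2 * (q / (1 - m))) x.
Proof.
move=> q0; exists (nu `^ (- (q / (1 - m)))); first exact: powR_ge0.
move=> t x t0; set c := t `^ alpha m; set b := q / (1 - m).
have c0 : 0 < c by rewrite powR_gt0.
have b0 : 0 < b by rewrite divr_gt0// subr_gt0.
set y := `|x| / c.
have y0 : 0 <= y by rewrite divr_ge0// ltW.
have base_eq : Dcal m + ktilde m * `|x| ^+ 2 * t `^ (- (2 * alpha m)) = Dcal m + ktilde m * y ^+ 2.
  have -> : t `^ (- (2 * alpha m)) = c ^- 2.
    by rewrite -mulNr mulrC powRrM -powR_invn ?powR_ge0.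
  by rewrite /y expr_div_n; ring.
rewrite /Ucal base_eq powRM ?powR_ge0// -!powRrM mulNr [- _ * q]mulNr mulrC.
rewrite [X in _ <= X]mulrAC ler_wpM2r ?powR_ge0//.
have -> : (1 - m)^-1 * q = b by rewrite mulrC.
have base_pos : 0 < nu * (1 + y) ^+ 2 by rewrite mulr_gt0// exprn_gt0// ltr_pwDl.
apply: (le_trans (ler_powRN b0 base_pos (Barenblatt_base_ge y))).
rewrite powRM ?(ltW nu_gt0) ?exprn_ge0 ?addr_ge0//.
by rewrite /decay -(@powR_mulrn _ _ 2) ?addr_ge0// -powRrM mulrN.
Qed.

Lemma integral_Ucal_powR_le (q : R) : 0 < q -> 1 - m < 2 * q ->
  exists2 K : R, 0 <= K & forall t, 0 < t ->
  (\int[mu]_x ((Ucal m t x) `^ q)%:E <= (K * t `^ (alpha m * (1 - q)))%:E)%E.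
Proof.
move=> q0 mq; have m1 : 0 < 1 - m by rewrite subr_gt0.
set b := 2 * (q / (1 - m)).
have b1 : 1 < b by rewrite /b mulrA ltr_pdivlMr// mul1r.
have [C C0 U_le] := Ucal_powR_le q0.
exists (2 * (C / (b - 1))); first by rewrite mulr_ge0// divr_ge0// subr_ge0 ltW.
move=> t t0; set M := C * t `^ (- (alpha m * q)).
have M0 : 0 <= M by rewrite mulr_ge0 ?powR_ge0.
apply: (@le_trans _ _ (\int[mu]_x (M * decay (t `^ alpha m) b x)%:E)%E).
  by apply: ge0_le_integral_nomeas => x _; rewrite lee_fin ?powR_ge0 ?U_le.
rewrite integral_decay ?powR_gt0// lee_fin /M.
rewrite [alpha m * (1 - q)]mulrBr mulr1 addrC powRD; last by apply/implyP => _; rewrite gt_eqF.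
rewrite le_eqVlt; apply/predU1l; field.
by rewrite addrC subr_eq0 gt_eqF.
Qed.

End Barenblatt_space_bounds.

Section integral_setX_setT.
Context d1 d2 (T1 : measurableType d1) (T2 : measurableType d2) (R : realType).
Variables (m1 : {sigma_finite_measure set T1 -> \bar R})
  (m2 : {sigma_finite_measure set T2 -> \bar R}).
Local Open Scope ereal_scope.

Lemma integral_setX_setT (A : set T1) (f : T1 * T2 -> \bar R) : measurable A ->
  measurable_fun [set: T1 * T2] f -> (forall z, 0 <= f z) ->
  \int[m1 \x m2]_(z in A `*` setT) f z = \int[m1]_(t in A) \int[m2]_x f (t, x).
Proof.
move=> mA mf f0; rewrite integral_mkcond fubini_tonelli1.
- rewrite [RHS]integral_mkcond; apply: eq_integral => t _.
  rewrite /fubini_F /patch; case: ifPn => tA.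
    by apply: eq_integral => x _; rewrite ifT// inE; split => //; move: tA; rewrite inE.
  rewrite integral0_eq// => x _; rewrite ifF//; apply/negbTE; apply: contra tA.
  by rewrite !inE => -[].
- apply/(measurable_restrictT _ _).1; first exact: measurableX.
  exact: measurable_funS mf.
- by move=> z; rewrite /patch; case: ifPn.
Qed.

End integral_setX_setT.

Section integral_itv0c.
Context {R : realType}.
Local Notation mu := (@lebesgue_measure R).

(* Exhaust [`]0, T]] by the increasing intervals [`[T / (n + 2), T]]. *)
Lemma ge0_integral_itv0c_le (f : R -> R) (T B : R) : 0 < T ->
  measurable_fun `]0, T] f -> (forall t, 0 < t <= T -> 0 <= f t) ->
  (forall e, 0 < e < T -> (\int[mu]_(t in `[e, T]) (f t)%:E <= B%:E)%E) ->
  (\int[mu]_(t in `]0%R, T]) (f t)%:E <= B%:E)%E.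
Proof.
move=> T0 mf f0 f_le.
pose S n := `[T / n.+2%:R, T]%classic.
have S_gt0 n : 0 < T / n.+2%:R by rewrite divr_gt0.
have S_ltT n : T / n.+2%:R < T by rewrite ltr_pdivrMr// ltr_pMr// ltr1n.
have S_sub n : S n `<=` `]0, T].
  by move=> t; rewrite /S /= !in_itv/= => /andP[+ ->]; rewrite andbT; exact: lt_le_trans.
have US : \bigcup_n S n = `]0, T]%classic.
  apply/seteqP; split => [t [n _ /S_sub//]|t].
  rewrite /= in_itv/= => /andP[t0 tT].
  exists (Num.truncn (T / t)) => //; rewrite /S /= in_itv/= tT andbT.
  rewrite ler_pdivrMr// -ler_pdivrMl// mulrC ltW// (lt_le_trans (truncnS_gt _))//.
  by rewrite ler_nat.
have ndS : nondecreasing_seq S.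
  apply/nondecreasing_seqP => n; apply/subsetPset => t; rewrite /S /= !in_itv/=.
  move=> /andP[+ ->]; rewrite andbT; apply: le_trans.
  by rewrite ler_pdivrMr// mulrAC ler_pdivlMr// ler_pM2l// ler_nat.
have mS n : measurable (S n) by exact: measurable_itv.
have mfS n : measurable_fun (S n) (EFin \o f).
  by apply/measurable_EFinP; exact: measurable_funS (S_sub n) mf.
have f0S n t : S n t -> (0 <= (f t)%:E)%E.
  by move=> /S_sub; rewrite /= in_itv/= lee_fin; exact: f0.
have := @ge0_nondecreasing_set_cvg_integral _ (measurableTypeR R) _ S (EFin \o f) mu ndS mS mfS f0S; rewrite US => cvg_int.
rewrite -(cvg_lim _ cvg_int)//; apply: lime_le; first by apply/cvg_ex; eexists; exact: cvg_int.
by apply: nearW => n; apply: f_le; rewrite S_gt0 S_ltT.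
Qed.

Lemma integral_itv0c_powR_le (K g T : R) : 0 <= K -> -1 < g -> 0 < T ->
  (\int[mu]_(t in `]0%R, T]) (K * t `^ g)%:E <= (K / (g + 1) * T `^ (g + 1))%:E)%E.
Proof.
move=> K0 g1 T0; have g10 : 0 < g + 1 by rewrite -ltrBlDr sub0r.
pose F t := K / (g + 1) * t `^ (g + 1).
have dF (t : R) : 0 < t -> is_derive t 1 F (K / (g + 1) * ((g + 1) * t `^ (g + 1 - 1))).
  by move=> t0; apply: is_deriveZ; exact: is_derive1_powR.
have cF (t : R) : 0 < t -> {for t, continuous F}.
  move=> t0; have [dF1 _] := dF t t0.
  by apply: differentiable_continuous; apply/derivable1_diffP.
apply: ge0_integral_itv0c_le => //.
- apply: measurable_funM; first exact: measurable_cst.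
  exact: measurable_funS (measurable_powR g).
- by move=> t _; rewrite mulr_ge0 ?powR_ge0.
move=> e /andP[e0 eT]; rewrite (@continuous_FTC2 _ _ F _ _ eT).
- by rewrite -EFinB lee_fin lerBlDr lerDl /F mulr_ge0 ?powR_ge0// divr_ge0// ltW.
- apply: continuous_in_subspaceT => t; rewrite inE/= in_itv/= => /andP[et _].
  apply: cvgM; first exact: cvg_cst.
  exact: powR_continuous (lt_le_trans e0 et).
- split.
  + by move=> t; rewrite in_itv/= => /andP[et _]; have [] := dF t (lt_trans e0 et).
  + exact/cvg_at_right_filter/cF.
  + exact/cvg_at_left_filter/cF.
- move=> t; rewrite in_itv/= => /andP[et _].
  rewrite derive1E; have [_ ->] := dF t (lt_trans e0 et).
  by rewrite addrK; field; rewrite gt_eqF.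
Qed.

End integral_itv0c.

Section Barenblatt_integrability.
Context {R : realType}.
Local Notation mu := (@lebesgue_measure R).

Lemma measurable_Ucal_powR (m q : R) :
  measurable_fun setT (fun z : R * R => (Ucal m z.1 z.2) `^ q).
Proof.
have mpow (r : R) : measurable_fun setT (fun z : R * R => z.1 `^ r).
  exact: measurableT_comp (measurable_powR r) measurable_fst.
apply: measurableT_comp (measurable_powR q) _.
apply: measurable_funM; first exact: mpow.
apply: measurableT_comp (measurable_powR _) _.
apply: measurable_funD; first exact: measurable_cst.
apply: measurable_funM; last exact: mpow.
apply: measurable_funM; first exact: measurable_cst.
by apply/measurable_funX/measurableT_comp => //; exact: measurable_snd.
Qed.

Variable m : R.
Hypotheses (m_gt0 : 0 < m) (m_lt1 : m < 1).

Lemma integral_strip_Ucal_powR_le (q : R) : 0 < q -> 1 - m < 2 * q ->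
  exists2 K : R, 0 <= K & forall A : set R, measurable A -> A `<=` `]0, +oo[ ->
  (\int[(mu \x mu)%E]_(z in A `*` setT) ((Ucal m z.1 z.2) `^ q)%:E <=
   \int[mu]_(t in A) (K * t `^ (alpha m * (1 - q)))%:E)%E.
Proof.
move=> q0 mq; have [K K0 int_le] := integral_Ucal_powR_le m_gt0 m_lt1 q0 mq.
exists K => // A mA A_pos.
rewrite integral_setX_setT//; last by move=> z; rewrite lee_fin powR_ge0.
  apply: ge0_le_integral_nomeas => [t _|t /A_pos]; last first.
    by rewrite /= in_itv/= andbT; exact: int_le.
  by apply: integral_ge0 => x _; rewrite lee_fin powR_ge0.
by apply/measurable_EFinP; exact: measurable_Ucal_powR.
Qed.

Lemma integral_strip_Ucal_powR_m_le (T : R) : 3^-1 < m ->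
  exists Cp : R, forall s l : R, 0 <= s -> s < l -> l <= T ->
  (\int[(mu \x mu)%E]_(z in `]s, l] `*` setT) ((Ucal m z.1 z.2) `^ m)%:E <=
   (Cp * (l - s))%:E)%E.
Proof.
move=> m3; have mm : 1 - m < 2 * m.
  have : 1 < 3 * m by rewrite -ltr_pdivrMl// mulrC mul1r.
  lra.
have [K K0 strip_le] := integral_strip_Ucal_powR_le m_gt0 mm.
exists (K * T `^ (alpha m * (1 - m))) => s l s0 sl lT.
have sl_pos : `]s, l] `<=` `]0, +oo[.
  by move=> t; rewrite /= !in_itv/= andbT => /andP[/(le_lt_trans s0)].
apply: le_trans (strip_le _ (measurable_itv _) sl_pos) _.
apply: (@le_trans _ _ (\int[mu]_(t in `]s, l]) (cst (K * T `^ (alpha m * (1 - m)))%:E) t)%E).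
  apply: ge0_le_integral_nomeas => t; first by rewrite lee_fin mulr_ge0 ?powR_ge0.
  rewrite /= in_itv/= lee_fin => /andP[st tl]; rewrite ler_wpM2l//.
  apply: ge0_ler_powR; rewrite ?nnegrE ?(le_trans tl)//.
  - by rewrite mulr_ge0// ?invr_ge0 ?subr_ge0 ?addr_ge0// ltW.
  - exact/ltW/(le_lt_trans s0).
  - exact: le_trans (ltW (le_lt_trans s0 st)) (le_trans tl lT).
by rewrite integral_cst//= lebesgue_measure_itv/= lte_fin sl -EFinB -EFinM.
Qed.

Lemma integral_Ucal_powR_2m_lty (T : R) : 5^-1 < m -> 0 < T ->
  (\int[(mu \x mu)%E]_(z in `]0%R, T] `*` setT) ((Ucal m z.1 z.2) `^ (2 * m))%:E < +oo)%E.
Proof.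
move=> m5 T0.
have g1 : -1 < alpha m * (1 - 2 * m).
  have m10 : 0 < m + 1 by rewrite addr_gt0.
  rewrite /alpha mulrC -ltr_pdivrMr ?invr_gt0// invrK; move: m_lt1; lra.
have m2m : 1 - m < 2 * (2 * m).
  have : 1 < 5 * m by rewrite -ltr_pdivrMl// mulrC mul1r.
  lra.
have q0 : 0 < 2 * m by rewrite mulr_gt0.
have [K K0 strip_le] := integral_strip_Ucal_powR_le q0 m2m.
have T_pos : `]0%R, T] `<=` `]0, +oo[.
  by move=> t; rewrite /= !in_itv/= andbT => /andP[].
apply: le_lt_trans (strip_le _ (measurable_itv _) T_pos) _.
by apply: le_lt_trans (integral_itv0c_powR_le K0 g1 T0) _; exact: ltry.
Qed.

Lemma integral_moment4_Ucal_lty (kappa : R) : 3 / 5 < m -> 0 < kappa ->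
  (\int[mu]_(x in setT) (`|x| ^+ 4 * Ucal m kappa x)%:E < +oo)%E.
Proof.
move=> m35 k0; set c := kappa `^ alpha m; set b := 2 * (1 / (1 - m)).
have c0 : 0 < c by rewrite powR_gt0.
have b4 : 1 < b - 4%:R.
  have m1 : 0 < 1 - m by rewrite subr_gt0.
  have : 3 < 5 * m by rewrite -ltr_pdivrMl// mulrC.
  rewrite /b ltrBrDr mulrA ltr_pdivlMr//; lra.
have [C C0 U_le] := Ucal_powR_le m_gt0 m_lt1 ltr01.
set M := c ^+ 4 * (C * kappa `^ (- (alpha m * 1))).
have M0 : 0 <= M by rewrite mulr_ge0 ?exprn_ge0 ?mulr_ge0 ?powR_ge0 ?(ltW c0).
apply: (@le_lt_trans _ _ (\int[mu]_x (M * decay c (b - 4%:R) x)%:E)%E); last first.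
  by rewrite integral_decay ?ltry.
apply: ge0_le_integral_nomeas => x _.
  by rewrite lee_fin mulr_ge0// /Ucal mulr_ge0 ?powR_ge0.
have := U_le kappa x k0; rewrite powRr1 ?(mulr_ge0, powR_ge0)// => Ux_le.
rewrite lee_fin; apply: le_trans (ler_wpM2l (exprn_ge0 4 (normr_ge0 x)) Ux_le) _.
have -> : M * decay c (b - 4%:R) x =
    C * kappa `^ (- (alpha m * 1)) * (c ^+ 4 * decay c (b - 4%:R) x) by rewrite /M; ring.
rewrite mulrCA ler_wpM2l ?mulr_ge0 ?powR_ge0//.
exact: decay_moment_le.
Qed.

End Barenblatt_integrability.

Theorem lemma4p2 (R : realType) (T m : R) (hT : 0 < T) (hm0 : 0 < m) (hm1 : m < 1) :
  [/\
  (* (i) *)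
  (3^-1 < m -> exists p : R, 2 <= p /\ exists Cp : R,
     forall s l : R, 0 <= s -> s < l -> l <= T ->
     (\int[(@lebesgue_measure R \x @lebesgue_measure R)%E]_(z in `]s, l] `*` setT)
        ((Ucal m z.1 z.2) `^ (p * (m - 1) / 2 + 1))%:E <= (Cp * (l - s))%:E)%E),
  (* (ii) *)
  (3^-1 < m ->
     (\int[(@lebesgue_measure R \x @lebesgue_measure R)%E]_(z in `]0%R, T] `*` setT)
        ((Ucal m z.1 z.2) `^ m)%:E < +oo)%E),
  (* (iii) *)
  (5^-1 < m ->
     (\int[(@lebesgue_measure R \x @lebesgue_measure R)%E]_(z in `]0%R, T] `*` setT)
        ((Ucal m z.1 z.2) `^ (2 * m))%:E < +oo)%E) &
  (* (iv) *)
  (3 / 5 < m -> forall kappa : R, 0 < kappa ->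
     (\int[@lebesgue_measure R]_(x in setT)
        (`|x| ^+ 4 * Ucal m kappa x)%:E < +oo)%E)].
Proof.
split.
- move=> m3; have [Cp strip_le] := integral_strip_Ucal_powR_m_le hm0 hm1 T m3.
  exists 2; split => //; exists Cp => s l s0 sl lT.
  have -> : 2 * (m - 1) / 2 + 1 = m by field.
  exact: strip_le.
- move=> m3; have [Cp strip_le] := integral_strip_Ucal_powR_m_le hm0 hm1 T m3.
  exact: le_lt_trans (strip_le 0 T (lexx 0) hT (lexx T)) (ltry _).
- by move=> m5; exact: integral_Ucal_powR_2m_lty.
- by move=> m35 kappa k0; exact: integral_moment4_Ucal_lty.
Qed.
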